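(* Let $\{\alpha_{i,j,k}\}_{1\le i,j,k\le d}$ be real numbers invariant under all permutations of the three indices, let $A_k:=(\alpha_{k,r,s})_{1\le r,s\le d}$ for $k=1,\dots,d$, and fix $i,j\in\{1,\dots,d\}$ with $C_{i,j}:=A_iA_j-A_jA_i$. Then the following are equivalent: (a) $(C_{i,j}\mathbf t)\cdot\big((I-t_1A_1-\cdots-t_dA_d)^{-1}\mathbf t\big)=0$ for all $\mathbf t$ in a neighborhood of $\mathbf 0\in\mathbb R^d$; (b) $(C_{i,j}\mathbf t)\cdot\big((t_1A_1+\cdots+t_dA_d)^n\mathbf t\big)=0$ for all $n\in\mathbb N$ and all $\mathbf t\in\mathbb R^d$; (c) $(C_{i,j}\mathbf t)\cdot\big((t_1A_1+\cdots+t_dA_d)^n\mathbf t\big)=0$ for all $1\le n\le d-1$ and all $\mathbf t\in\mathbb R^d$.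
   Context: $I$ denotes the $d\times d$ identity matrix and $\cdot$ the standard inner product on $\mathbb R^d$. *)

From HB Require Import structures.
From mathcomp Require Import all_boot all_order all_algebra.
From mathcomp Require Import reals.
Set Implicit Arguments. Unset Strict Implicit. Unset Printing Implicit Defensive.
Import Order.TTheory GRing.Theory Num.Theory.
Local Open Scope ring_scope.

Definition dotv (R : realType) (d : nat) (u v : 'cV[R]_d) : R :=
  \sum_(r < d) u r 0 * v r 0.

Definition fully_symmetric (R : realType) (d : nat) (alpha : 'I_d -> 'I_d -> 'I_d -> R) :=
  forall i j k, alpha i j k = alpha i k j /\ alpha i j k = alpha j i k /\
                alpha i j k = alpha j k i /\ alpha i j k = alpha k i j /\
                alpha i j k = alpha k j i.

Definition Amat (R : realType) (d : nat) (alpha : 'I_d -> 'I_d -> 'I_d -> R) (k : 'I_d)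
  : 'M[R]_d := \matrix_(r, s) alpha k r s.

Definition Cmat (R : realType) (d : nat) (alpha : 'I_d -> 'I_d -> 'I_d -> R) (i j : 'I_d)
  : 'M[R]_d := Amat alpha i *m Amat alpha j - Amat alpha j *m Amat alpha i.

Definition tA (R : realType) (d : nat) (alpha : 'I_d -> 'I_d -> 'I_d -> R) (t : 'cV[R]_d)
  : 'M[R]_d := \sum_(k < d) t k 0 *: Amat alpha k.

From HB Require Import structures.
From mathcomp Require Import all_boot all_order all_algebra.
From mathcomp Require Import reals.
From mathcomp Require Import ring lra.
Set Implicit Arguments. Unset Strict Implicit. Unset Printing Implicit Defensive.
Import Order.TTheory GRing.Theory Num.Theory.
Local Open Scope ring_scope.

(* Since the A_k are symmetric, C is skew-symmetric and (C t).t = 0. Fix t and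
   put M := t_1 A_1 + ... + t_d A_d and L(Y) := (C t).(Y t), a linear form on
   matrices. By Cayley-Hamilton, L vanishes on all polynomials in M as soon as
   it vanishes on I, M, ..., M^(d-1); this gives (c) => (b), and (b) => (a)
   because (I - M)^-1 is a polynomial in M. For (a) => (b), replacing t by t/u
   shows that L((uI - M)^-1) = 0 for all large u. With chi the characteristic
   polynomial of M, the adjugate identity
     chi(u) (uI - M)^-1 = sum_k u^k (chi div X^(k+1))(M)
   turns this into a polynomial in u with infinitely many roots; its
   coefficients L((chi div X^(k+1))(M)) therefore vanish, and they are
   unitriangular in L(I), ..., L(M^(d-1)). *)

Section DividedDifference.
Variable R : comNzRingType.
Implicit Types (p : {poly R}) (u c : R).

(* The polynomial (p(u) - p(X)) / (u - X). *)
Definition divdiff p u : {poly R} := \sum_(k < size p) u ^+ k *: drop_poly k.+1 p.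

Lemma divdiff_widen N p u : (size p <= N)%N ->
  divdiff p u = \sum_(k < N) u ^+ k *: drop_poly k.+1 p.
Proof.
move=> spN; rewrite /divdiff (big_ord_widen N (fun k => u ^+ k *: drop_poly k.+1 p)) //.
rewrite big_mkcond; apply: eq_bigr => k _; case: ltnP => // spk.
by rewrite drop_poly_eq0 ?scaler0 // ltnW.
Qed.

Lemma drop_polyS_MXaddC k p c : drop_poly k.+1 (p * 'X + c%:P) = drop_poly k p.
Proof.
rewrite drop_polyD [drop_poly _ c%:P]drop_poly_eq0 ?addr0.
  by rewrite -['X]expr1 drop_polyMXn subSS subn0 expr0 mulr1.
exact: leq_trans (size_polyC_leq1 c) _.
Qed.

Lemma divdiff_MXaddC p c u : divdiff (p * 'X + c%:P) u = p + u *: divdiff p u.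
Proof.
rewrite (@divdiff_widen (size p).+1); last by rewrite size_MXaddC; case: ifP.
rewrite big_ord_recl expr0 scale1r drop_polyS_MXaddC drop_poly0l /divdiff scaler_sumr.
by congr (_ + _); apply: eq_bigr => k _; rewrite drop_polyS_MXaddC exprS scalerA.
Qed.

Lemma mul_divdiff p u : (u%:P - 'X) * divdiff p u = (p.[u])%:P - p.
Proof.
elim/poly_ind: p => [|p c IH].
  by rewrite /divdiff size_poly0 big_ord0 mulr0 horner0 subr0.
rewrite divdiff_MXaddC hornerMXaddC -mul_polyC mulrDr mulrCA IH polyCD polyCM.
ring.
Qed.

End DividedDifference.

Lemma drop_poly_monic (R : nzRingType) (p : {poly R}) N m :
  p \is monic -> size p = N.+1 -> (m <= N)%N ->
  drop_poly (N - m) p = 'X^m + \sum_(j < m) p`_(j + (N - m)) *: 'X^j.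
Proof.
move=> /monicP p1 sp leqmN.
rewrite /drop_poly poly_def sp subSn ?leq_subr // subKn // big_ord_recr /= addrC.
by rewrite subnKC // -[N]/(N.+1.-1) -sp -lead_coefE p1 scale1r.
Qed.

Lemma ray_roots_poly_eq0 (F : numFieldType) (p : {poly F}) (U : F) :
  (forall u, U <= u -> p.[u] = 0) -> p = 0.
Proof.
move=> p0; apply: (@roots_geq_poly_eq0 _ _ [seq U + k%:R | k <- iota 0 (size p)]).
- by apply/allP => _ /mapP [k _ ->]; apply/rootP/p0; rewrite lerDl ler0n.
- by rewrite map_inj_uniq ?iota_uniq // => k l /addrI /eqP; rewrite eqr_nat => /eqP.
- by rewrite size_map size_iota.
Qed.

Lemma horner_char_poly (R : comNzRingType) n (M : 'M[R]_n) u :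
  (char_poly M).[u] = \det (u%:M - M).
Proof.
rewrite -horner_evalE -det_map_mx; congr (\det _); apply/matrixP => i j.
by rewrite !mxE rmorphB rmorphMn /= !horner_evalE hornerX hornerC.
Qed.

Section Resolvent.
Variables (F : fieldType) (n : nat) (M : 'M[F]_n.+1).
Local Notation chi := (char_poly M).

Lemma resolvent_mul_horner_divdiff u :
  (u%:M - M) *m horner_mx M (divdiff chi u) = chi.[u]%:M.
Proof.
have := congr1 (horner_mx M) (mul_divdiff chi u).
rewrite rmorphM !rmorphB /= !horner_mx_C horner_mx_X Cayley_Hamilton subr0.
by rewrite mulmxE.
Qed.

Lemma horner_divdiff_char_poly u : u%:M - M \in unitmx ->
  horner_mx M (divdiff chi u) = chi.[u] *: invmx (u%:M - M).
Proof.
move=> unitM; rewrite -[LHS](mulKmx unitM) resolvent_mul_horner_divdiff.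
by rewrite mul_mx_scalar.
Qed.

Lemma invmx_horner_mx u : exists p, invmx (u%:M - M) = horner_mx M p.
Proof.
have [unitM|nunitM] := boolP (u%:M - M \in unitmx); last first.
  exists (u%:P - 'X).
  by rewrite invmx_out // rmorphB /= horner_mx_C horner_mx_X.
have chiu : chi.[u] != 0 by rewrite horner_char_poly -unitfE -unitmxE.
exists (chi.[u]^-1 *: divdiff chi u).
by rewrite linearZ /= horner_divdiff_char_poly // scalerA mulVf // scale1r.
Qed.

End Resolvent.

Section ScalarOnPowers.
Variables (F : fieldType) (n : nat) (M : 'M[F]_n.+1) (L : {scalar 'M[F]_n.+1}).
Local Notation chi := (char_poly M).

Lemma scalar_horner_mx_eq0 :
  (forall m, (m <= n)%N -> L (M ^+ m) = 0) -> forall p, L (horner_mx M p) = 0.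
Proof.
move=> Lpow p; rewrite (divp_eq p chi) rmorphD rmorphM /= Cayley_Hamilton mulr0 add0r.
have : (size (p %% chi)%R <= n.+1)%N.
  by rewrite -ltnS -(size_char_poly M) ltn_modp -size_poly_eq0 size_char_poly.
move: (p %% chi) => r sr; rewrite -(coefK r) poly_def !linear_sum big1 // => k _.
by rewrite !linearZ rmorphXn /= horner_mx_X Lpow ?mulr0 // -ltnS (leq_trans _ sr).
Qed.

Lemma scalar_powers_eq0 :
  (forall m, (m <= n)%N -> L (M ^+ m) = 0) -> forall m, L (M ^+ m) = 0.
Proof.
move=> Lpow m; have := scalar_horner_mx_eq0 Lpow 'X^m.
by rewrite rmorphXn /= horner_mx_X.
Qed.

Lemma scalar_powers_eq0_of_drop_poly :
  (forall k, (k <= n)%N -> L (horner_mx M (drop_poly k.+1 chi)) = 0) ->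
  forall m, (m <= n)%N -> L (M ^+ m) = 0.
Proof.
move=> Ldrop; elim/ltn_ind => m IH lemn.
have := Ldrop (n - m)%N (leq_subr _ _); rewrite -subSn //.
rewrite (drop_poly_monic (char_poly_monic M) (size_char_poly M)) ?(leq_trans lemn) //.
rewrite !linearD !linear_sum /= big1 ?addr0 => [|j _]; last first.
  by rewrite !linearZ rmorphXn /= horner_mx_X IH ?mulr0 // (leq_trans _ lemn) // ltnW.
by rewrite rmorphXn /= horner_mx_X.
Qed.

End ScalarOnPowers.

Section ScalarOnResolvent.
Variables (F : numFieldType) (n : nat) (M : 'M[F]_n.+1) (L : {scalar 'M[F]_n.+1}).
Local Notation chi := (char_poly M).

Lemma scalar_powers_eq0_of_resolvent U :
  (forall u, U <= u -> u%:M - M \in unitmx -> L (invmx (u%:M - M)) = 0) ->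
  forall m, (m <= n)%N -> L (M ^+ m) = 0.
Proof.
move=> Linv; set G := \poly_(k < n.+2) L (horner_mx M (drop_poly k.+1 chi)).
have GE u : G.[u] = L (horner_mx M (divdiff chi u)).
  rewrite horner_poly /divdiff size_char_poly !linear_sum; apply: eq_bigr => k _.
  by rewrite !linearZ mulrC.
have : chi * G = 0.
  apply: (@ray_roots_poly_eq0 _ _ U) => u Uu; rewrite hornerM GE.
  have [unitM|] := boolP (u%:M - M \in unitmx).
    by rewrite horner_divdiff_char_poly // linearZ /= Linv // !mulr0.
  by rewrite unitmxE unitfE -horner_char_poly negbK => /eqP ->; rewrite mul0r.
move=> /eqP; rewrite mulf_eq0 (negbTE (monic_neq0 (char_poly_monic M))) /= => /eqP G0.
apply: scalar_powers_eq0_of_drop_poly => k lekn.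
by have := congr1 (fun q : {poly F} => q`_k) G0; rewrite coef_poly coef0 ltnS ltnW.
Qed.

End ScalarOnResolvent.

Section SkewPairing.
Variables (R : realType) (d : nat).
Implicit Types (u v t : 'cV[R]_d) (C Y : 'M[R]_d).

Lemma dotvC u v : dotv u v = dotv v u.
Proof. by apply: eq_bigr => r _; rewrite mulrC. Qed.

Lemma dotv_trmx u v : dotv u v = (u^T *m v) 0 0.
Proof. by rewrite mxE; apply: eq_bigr => r _; rewrite mxE. Qed.

Definition mxpair C t Y := dotv (C *m t) (Y *m t).

Lemma mxpair_skew1 C t : C^T = - C -> mxpair C t 1%:M = 0.
Proof.
move=> skewC; rewrite /mxpair mul1mx.
suff : dotv (C *m t) t = - dotv (C *m t) t by lra.
rewrite [LHS]dotv_trmx trmx_mul skewC mulmxN mulNmx -mulmxA mxE -dotv_trmx.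
by rewrite dotvC.
Qed.

Fact mxpair_is_scalar C t : scalar (mxpair C t).
Proof.
move=> a Y Z; rewrite /mxpair /dotv mulmxDl -scalemxAl mulr_sumr -big_split.
by apply: eq_bigr => r _; rewrite !mxE mulrDr mulrCA.
Qed.

HB.instance Definition _ C t :=
  GRing.isLinear.Build R 'M[R]_d R *%R (mxpair C t) (mxpair_is_scalar C t).

Lemma mxpairZ C s t Y : mxpair C (s *: t) Y = s ^+ 2 * mxpair C t Y.
Proof.
rewrite /mxpair /dotv mulr_sumr; apply: eq_bigr => r _.
by rewrite -!scalemxAr !mxE expr2 -!mulrA; congr (_ * _); rewrite mulrCA.
Qed.

End SkewPairing.

Section SymmetricTensor.
Variables (R : realType) (d : nat) (alpha : 'I_d -> 'I_d -> 'I_d -> R).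
Implicit Types (t : 'cV[R]_d) (C : 'M[R]_d).

Lemma Amat_sym k : fully_symmetric alpha -> (Amat alpha k)^T = Amat alpha k.
Proof. by move=> symA; apply/matrixP => r s; rewrite !mxE; case: (symA k s r). Qed.

Lemma Cmat_skew i j : fully_symmetric alpha -> (Cmat alpha i j)^T = - Cmat alpha i j.
Proof. by move=> symA; rewrite /Cmat linearB /= !trmx_mul !Amat_sym // opprB. Qed.

Lemma tAZ s t : tA alpha (s *: t) = s *: tA alpha t.
Proof. by rewrite /tA scaler_sumr; apply: eq_bigr => k _; rewrite mxE scalerA. Qed.

Lemma mxpair_resolvent_eq0 C (e : R) t : 0 < e ->
  (forall t, (forall k, `|t k 0| < e) -> mxpair C t (invmx (1%:M - tA alpha t)) = 0) ->
  forall u, (1 + \sum_k `|t k 0|) / e <= u -> u%:M - tA alpha t \in unitmx ->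
  mxpair C t (invmx (u%:M - tA alpha t)) = 0.
Proof.
move=> e0 small_eq0 u Uu unitM.
have u0 : 0 < u.
  apply: lt_le_trans Uu; apply: divr_gt0 => //.
  by apply: ltr_pwDl => //; apply: sumr_ge0.
have small k : `|(u^-1 *: t) k 0| < e.
  rewrite mxE normrM gtr0_norm ?invr_gt0 // mulrC ltr_pdivrMr //.
  have tk : `|t k 0| <= \sum_k `|t k 0| by rewrite (bigD1 k) //= lerDl sumr_ge0.
  by move: Uu; rewrite ler_pdivrMr // mulrC; lra.
have uV0 : u^-1 != 0 by rewrite invr_eq0 gt_eqF.
have resolventE : 1%:M - u^-1 *: tA alpha t = u^-1 *: (u%:M - tA alpha t).
  by rewrite scalerBr scale_scalar_mx mulVf ?gt_eqF.
have := small_eq0 _ small.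
rewrite tAZ mxpairZ resolventE invmxZ ?unitmxZ ?unitfE // invrK linearZ /=.
by move/eqP; rewrite !mulf_eq0 (negbTE uV0) gt_eqF //= => /eqP.
Qed.

End SymmetricTensor.

Theorem mainTheorem8 (R : realType) (d : nat)
  (alpha : 'I_d -> 'I_d -> 'I_d -> R) (i j : 'I_d) :
  fully_symmetric alpha ->
  let C := Cmat alpha i j in
  let Pa := exists2 e : R, 0 < e &
      forall t : 'cV[R]_d, (forall k, `|t k 0| < e) ->
        dotv (C *m t) (invmx (1%:M - tA alpha t) *m t) = 0 in
  let Pb := forall (n : nat) (t : 'cV[R]_d),
        dotv (C *m t) ((tA alpha t) ^+ n *m t) = 0 in
  let Pc := forall (n : nat) (t : 'cV[R]_d), (1 <= n <= d.-1)%N ->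
        dotv (C *m t) ((tA alpha t) ^+ n *m t) = 0 in
  (Pa <-> Pb) /\ (Pb <-> Pc).
Proof.
case: d alpha i j => [|n] alpha i j symA; first by case: i.
move=> C Pa Pb Pc; have skewC : C^T = - C by apply: Cmat_skew.
split; split.
- case=> e e0 Ha m t; apply: (scalar_powers_eq0 (L := mxpair C t)).
  exact: scalar_powers_eq0_of_resolvent (mxpair_resolvent_eq0 e0 Ha).
- move=> Hb; exists 1 => // t _; have [p ->] := invmx_horner_mx (tA alpha t) 1.
  by apply: (scalar_horner_mx_eq0 (L := mxpair C t)) => m _; apply: Hb.
- by move=> Hb m t _; apply: Hb.
- move=> Hc m t; apply: (scalar_powers_eq0 (L := mxpair C t)) => -[_|k lekn].
    by rewrite expr0; apply: mxpair_skew1.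
  exact: Hc.
Qed.
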